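(* Let $(M,\omega)$ be a closed symplectic manifold and $K\subset M$ compact, and let $\widehat{tel}$ be the completed telescope complex with differential $\delta$ associated with an acceleration datum $\{H_n\}$ for $K$. If $\widehat{tel}$ has finite boundary depth, then $\operatorname{im}(\delta)=\overline{\operatorname{im}(\delta)}$, and hence the natural map $SH_M(K;\Lambda)\to SH^{red}_M(K;\Lambda)$ is an isomorphism.
   Context: $\Lambda$ is the Novikov field of series $\sum_{i\ge0}a_iT^{\lambda_i}$, $a_i\in\mathbb{Q}$, $\lambda_i\in\mathbb{R}$ strictly increasing to $+\infty$, valuation $\operatorname{val}$. An acceleration datum for $K$ is a sequence of nondegenerate Hamiltonians $H_1\le H_2\le\cdots$ on $M\times S^1$, negative on $K\times S^1$, converging to $0$ on $K$ and to $+\infty$ off $K$, with monotone homotopies giving continuation maps between the Floer complexes $CF(H_n;\Lambda)$ (generated by contractible orbits, differential weighted by $T^{E_{top}(u)}$). $\widehat{tel}$ is the completion with respect to the norm $e^{-\operatorname{val}}$ (valuation = minimum coefficient valuation) of the telescope $\bigoplus_n(CF(H_n;\Lambda)\oplus CF(H_n;\Lambda)[1])$ with its telescope differential $\delta$. $SH_M(K;\Lambda)=\ker\delta/\operatorname{im}\delta$, $SH^{red}_M(K;\Lambda)=\ker\delta/\overline{\operatorname{im}\delta}$, closure in the norm topology. The boundary depth of $(\widehat{tel},\delta)$ is $\sup_{x\in\operatorname{im}\delta}\inf_{y:\delta y=x}(\operatorname{val}(x)-\operatorname{val}(y))$. *)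

From HB Require Import structures.
From mathcomp Require Import all_boot all_order all_algebra.
From mathcomp Require Import all_classical all_reals ereal.
Set Implicit Arguments. Unset Strict Implicit. Unset Printing Implicit Defensive.
Import Order.TTheory GRing.Theory Num.Theory.
Local Open Scope ring_scope.
Local Open Scope classical_set_scope.
Local Open Scope ereal_scope.

Definition field_valuation (R : realType) (F : fieldType) (valF : F -> \bar R) :=
  [/\ forall a, valF a != -oo,
      forall a, (valF a == +oo) = (a == 0%R),
      forall a b, valF (a * b)%R = valF a + valF b
    & forall a b, Order.min (valF a) (valF b) <= valF (a + b)%R].

(* A valuation on a vector space over a valued field (norm = e^{-val}). *)
Definition module_valuation (R : realType) (F : fieldType) (valF : F -> \bar R)
    (V : lmodType F) (val : V -> \bar R) :=
  [/\ forall x, val x != -oo,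
      forall x, (val x == +oo) = (x == 0%R),
      forall a x, val (a *: x) = valF a + val x
    & forall x y, Order.min (val x) (val y) <= val (x + y)%R].

Definition val_complete (R : realType) (V : zmodType) (val : V -> \bar R) :=
  forall u : nat -> V,
    (forall r : R, exists N, forall m n, (N <= m)%N -> (N <= n)%N ->
        r%:E < val (u n - u m)%R) ->
    exists l, forall r : R, exists N, forall n, (N <= n)%N -> r%:E < val (u n - l)%R.

Definition val_closure (R : realType) (V : zmodType) (val : V -> \bar R)
    (S : set V) : set V :=
  [set x | forall r : R, exists2 s, S s & r%:E < val (x - s)%R].

Definition image_of (V : zmodType) (d : V -> V) : set V :=
  [set x | exists y, d y = x].

Definition boundary_depth (R : realType) (V : zmodType) (val : V -> \bar R)
    (d : V -> V) : \bar R :=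
  ereal_sup [set ereal_inf [set val x - val y | y in [set y | d y = x]]
            | x in [set x | image_of d x /\ x <> 0%R]].

(* Let B bound the boundary depth. A point x of the closure of im(delta) is the
   limit of boundaries s_k; the differences s_(k+1) - s_k are boundaries whose
   valuation tends to +oo, so they have primitives y_k whose valuation (at most B
   smaller) also tends to +oo. In a complete non-Archimedean module the series
   of the y_k converges to some l, and since delta does not decrease valuation it
   is continuous, whence delta l = x - s_0 and x is a boundary. *)

From HB Require Import structures.
From mathcomp Require Import all_boot all_order all_algebra.
From mathcomp Require Import all_classical all_reals ereal.
From mathcomp Require Import lra.
Import Order.TTheory GRing.Theory Num.Theory.
Local Open Scope ring_scope.
Local Open Scope classical_set_scope.
Local Open Scope ereal_scope.

Set Implicit Arguments.
Unset Strict Implicit.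
Unset Printing Implicit Defensive.

Section ValuedModule.
Variables (R : realType) (F : fieldType) (valF : F -> \bar R).
Variables (V : lmodType F) (val : V -> \bar R).
Hypothesis valFP : field_valuation valF.
Hypothesis valP : module_valuation valF val.

Lemma val_eqy x : (val x == +oo) = (x == 0%R).
Proof. by case: valP. Qed.

Lemma val0 : val 0%R = +oo.
Proof. by apply/eqP; rewrite val_eqy. Qed.

Lemma val_ltD (r : \bar R) x y : r < val x -> r < val y -> r < val (x + y)%R.
Proof.
case: valP => _ _ _ val_minD rx ry.
by apply: lt_le_trans (val_minD x y); rewrite lt_min rx ry.
Qed.

Lemma valF_fin a : a != 0%R -> valF a \is a fin_num.
Proof.
case: valFP => valFNy valF_eqy _ _ a0.
by rewrite fin_numE valFNy valF_eqy.
Qed.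

Lemma valFN1 : valF (-1)%R = 0.
Proof.
case: valFP => _ _ valFM _.
have := valFM 1%R 1%R; have := valFM (-1)%R (-1)%R; rewrite mulrNN !mulr1.
have N1_neq0 : (-1 : F)%R != 0%R by rewrite oppr_eq0 oner_eq0.
rewrite -(fineK (valF_fin (oner_neq0 F))) -(fineK (valF_fin N1_neq0)) -!EFinD.
by move=> [] h1 [] hN1; congr _%:E; lra.
Qed.

Lemma valN x : val (- x)%R = val x.
Proof. by case: valP => _ _ valZ _; rewrite -scaleN1r valZ valFN1 add0e. Qed.

Lemma val_subC x y : val (x - y)%R = val (y - x)%R.
Proof. by rewrite -valN opprB. Qed.

Lemma val_unbounded_eq0 x : (forall r : R, r%:E < val x) -> x = 0%R.
Proof.
move=> xgt; apply/eqP; rewrite -val_eqy.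
case: valP => valNy _ _ _; move: (valNy x) (xgt 0%R).
by case: (val x) xgt => [r /(_ r)| |] //; rewrite ltxx.
Qed.

Lemma val_sum_gt (I : Type) (s : seq I) (P : pred I) (G : I -> V) (r : R) :
  (forall i, P i -> r%:E < val (G i)) -> r%:E < val (\sum_(i <- s | P i) G i)%R.
Proof.
move=> Ggt; apply: (big_ind (fun v => r%:E < val v)) => //; last exact: val_ltD.
by rewrite val0 ltry.
Qed.

Definition val_cvg (u : nat -> V) (l : V) :=
  forall r : R, exists N, forall n, (N <= n)%N -> r%:E < val (u n - l)%R.

Definition val_cauchy (u : nat -> V) :=
  forall r : R, exists N, forall m n, (N <= m)%N -> (N <= n)%N ->
    r%:E < val (u n - u m)%R.

Lemma val_cvg_unique u l l' : val_cvg u l -> val_cvg u l' -> l = l'.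
Proof.
move=> ul ul'; apply/eqP; rewrite -subr_eq0; apply/eqP/val_unbounded_eq0 => r.
have [N uN] := ul r; have [N' uN'] := ul' r.
have -> : (l - l' = - (u (maxn N N') - l) + (u (maxn N N') - l'))%R.
  by rewrite opprB addrA subrK.
by apply: val_ltD; rewrite ?valN; [apply: uN | apply: uN']; rewrite leq_max leqnn ?orbT.
Qed.

Lemma val_cvg_map (d : {additive V -> V}) u l :
  (forall x, val x <= val (d x)) -> val_cvg u l -> val_cvg (d \o u) (d l).
Proof.
move=> dmon ul r; have [N uN] := ul r; exists N => n Nn.
by rewrite /= -raddfB; apply: lt_le_trans (dmon _); apply: uN.
Qed.

Lemma val_cvg_succB u l : val_cvg u l -> val_cvg (fun k => u k.+1 - u k)%R 0%R.
Proof.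
move=> ul r; have [N uN] := ul r; exists N => n Nn.
have -> : (u n.+1 - u n - 0 = (u n.+1 - l) - (u n - l))%R.
  by rewrite subr0 opprB addrA subrK.
by apply: val_ltD; rewrite ?valN; apply: uN => //; apply: leqW.
Qed.

Lemma val_cvg0_le (u v : nat -> V) (B : R) :
  (forall k, val (u k) <= val (v k) + B%:E) -> val_cvg u 0%R -> val_cvg v 0%R.
Proof.
move=> uv u0 r; have [N uN] := u0 (r + B)%R; exists N => n Nn.
have := uN n Nn; rewrite !subr0 => /lt_le_trans/(_ (uv n)).
case: (val (v n)) => [x| |] //.
  by rewrite -EFinD !lte_fin ltrD2r.
by move=> _; rewrite ltry.
Qed.

Lemma val_cvg_series_cauchy (y : nat -> V) :
  val_cvg y 0%R -> val_cauchy (fun n => \sum_(i < n) y i)%R.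
Proof.
move=> y0 r; have [N yN] := y0 r; exists N.
suff sumB m n : (N <= m <= n)%N -> r%:E < val (\sum_(i < n) y i - \sum_(i < m) y i)%R.
  move=> m n Nm Nn; case: (leqP m n) => [mn | /ltnW nm].
    by apply: sumB; rewrite Nm mn.
  by rewrite val_subC; apply: sumB; rewrite Nn nm.
move=> /andP[Nm mn]; rewrite -!(big_mkord xpredT) (big_cat_nat (leq0n m) mn).
rewrite addrC addKr big_nat_cond; apply: val_sum_gt => i /andP[/andP[mi _] _].
by rewrite -(subr0 (y i)); apply: yN; apply: leq_trans mi.
Qed.

Lemma val_closure_cvg (S : set V) x :
  val_closure val S x -> exists2 s : nat -> V, (forall k, S (s k)) & val_cvg s x.
Proof.
move=> /(_ _%:R) xS.
have /choice[s sP] : forall k : nat, exists s, S s /\ (k%:R)%:E < val (x - s)%R.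
  by move=> k; have [s Ss xs] := xS k; exists s.
exists s => [k | r]; first by case: (sP k).
exists (Num.Def.archi_bound `|r|%R) => n rn.
rewrite val_subC; apply: lt_trans (proj2 (sP n)); rewrite lte_fin.
apply: le_lt_trans (ler_norm r) _; apply: lt_le_trans (archi_boundP (normr_ge0 r)) _.
by rewrite ler_nat.
Qed.

Lemma boundary_depth_primitive (d : {additive V -> V}) :
  boundary_depth val d < +oo ->
  exists B : R, forall x, image_of d x -> exists2 y, d y = x & val x <= val y + B%:E.
Proof.
move=> bd_fin; have [B bdB] : exists B : R, boundary_depth val d < B%:E.
  case: (boundary_depth val d) bd_fin => [b| |] // _.
    by exists (b + 1)%R; rewrite lte_fin ltrDl.
  by exists 0%R; rewrite ltNyr.
exists B => x [y0 dy0]; have [->|x0] := eqVneq x 0%R.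
  by exists 0%R; rewrite ?raddf0 ?val0.
have : ereal_inf [set val x - val y | y in [set y | d y = x]] < B%:E.
  apply: le_lt_trans bdB; apply: ereal_sup_ubound; exists x => //.
  by split; [exists y0 | apply/eqP].
case/ereal_inf_lt => _ [y dy <-] xy; exists y => //.
case: valP => valNy _ _ _; move: (valNy y) xy.
case: (val y) => [r| |] // _; last by move=> _; rewrite addye ?leey.
by rewrite lteBlDr // addeC => /ltW.
Qed.

Lemma val_closure_image_subset (d : {additive V -> V}) :
  val_complete val -> (forall x, val x <= val (d x)) -> boundary_depth val d < +oo ->
  val_closure val (image_of d) `<=` image_of d.
Proof.
move=> complete dmon /boundary_depth_primitive[B dB] x /val_closure_cvg[s sd sx].
have /choice[y yP] : forall k, exists y,
    d y = (s k.+1 - s k)%R /\ val (s k.+1 - s k)%R <= val y + B%:E.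
  move=> k; have [a da] := sd k; have [b db] := sd k.+1.
  have [|y dy yB] := dB (s k.+1 - s k)%R; last by exists y.
  by exists (b - a)%R; rewrite raddfB da db.
have y0 : val_cvg y 0%R := val_cvg0_le (fun k => (yP k).2) (val_cvg_succB sx).
have [l Yl] := complete _ (val_cvg_series_cauchy y0).
have dY n : d (\sum_(i < n) y i)%R = (s n - s 0%N)%R.
  rewrite raddf_sum; under eq_bigr do rewrite (yP _).1.
  by rewrite -(big_mkord xpredT (fun i => s i.+1 - s i)%R) telescope_sumr.
have dl : d l = (x - s 0%N)%R.
  apply: (val_cvg_unique (val_cvg_map dmon Yl)) => r; have [N sN] := sx r.
  by exists N => n Nn; rewrite /= dY opprB addrA subrK; apply: sN.
by have [a da] := sd 0%N; exists (l + a)%R; rewrite raddfD dl da subrK.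
Qed.

End ValuedModule.

Theorem lemma3p19 (R : realType) (F : fieldType) (valF : F -> \bar R)
    (V : lmodType F) (val : V -> \bar R) (delta : {linear V -> V}) :
  field_valuation valF ->
  module_valuation valF val ->
  val_complete val ->
  (forall x, delta (delta x) = 0%R) ->
  (forall x, val x <= val (delta x)) ->
  boundary_depth val delta < +oo ->
  image_of delta = val_closure val (image_of delta) /\
  (forall x, delta x = 0%R -> val_closure val (image_of delta) x ->
     image_of delta x).
Proof.
move=> valFP valP complete _ dmon bd_fin.
have closed := val_closure_image_subset valFP valP complete dmon bd_fin.
split; last by move=> x _ /closed.
apply/seteqP; split=> [x dx r | x /closed //].
by exists x => //; rewrite subrr (val0 valP) ltry.
Qed.
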